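(* (1) Let $R$ be a uniquely clean ring. Then $R$ is $n$-torsion clean if and only if $U(R)$ has exponent $n$. (2) Let $R$ be a ring such that $R/J(R)$ is boolean and $J(R)$ is nil of bounded index. Then $R$ is $n$-torsion clean, where $n$ is the exponent of $U(R)$. Moreover, $n$ is a power of $2$.
   Context: All rings are associative with identity; $U(R)$ is the unit group and $J(R)$ the Jacobson radical. A ring is uniquely clean if every element has a unique expression as $e+u$ with $e$ idempotent and $u$ a unit. A ring $R$ is $n$-torsion clean if every $r\in R$ can be written $r=e+u$ with $e^2=e$, $u\in U(R)$, $u^n=1$, and $n$ is the smallest natural number with this property. An ideal $I$ is nil of bounded index if there is $k$ with $r^k=0$ for all $r\in I$. *)

(* Rings are (possibly non-commutative) unitRingType's:
   associative, with identity, 1 != 0, and decidable units. *)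
From mathcomp Require Import all_boot all_algebra.
Set Implicit Arguments. Unset Strict Implicit. Unset Printing Implicit Defensive.
Import GRing.Theory.
Local Open Scope ring_scope.

Section Defs.
Variable R : unitRingType.

Definition idempotent (e : R) : Prop := e * e = e.

Definition uniquely_clean : Prop :=
  forall r : R, exists! p : R * R,
    [/\ idempotent p.1, p.2 \is a GRing.unit & r = p.1 + p.2].

Definition torsion_clean_with (n : nat) : Prop :=
  forall r : R, exists e u : R,
    [/\ idempotent e, u \is a GRing.unit, u ^+ n = 1 & r = e + u].

Definition n_torsion_clean (n : nat) : Prop :=
  [/\ (0 < n)%N, torsion_clean_with n &
      forall m : nat, (0 < m)%N -> torsion_clean_with m -> (n <= m)%N].

Definition units_killed_by (n : nat) : Prop :=
  forall u : R, u \is a GRing.unit -> u ^+ n = 1.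

Definition unit_exponent (n : nat) : Prop :=
  [/\ (0 < n)%N, units_killed_by n &
      forall m : nat, (0 < m)%N -> units_killed_by m -> (n <= m)%N].

Definition left_ideal (I : R -> Prop) : Prop :=
  [/\ I 0,
      (forall x y, I x -> I y -> I (x - y)) &
      (forall r x, I x -> I (r * x))].

Definition maximal_left_ideal (I : R -> Prop) : Prop :=
  [/\ left_ideal I, ~ I 1 &
      forall K : R -> Prop, left_ideal K -> ~ K 1 ->
        (forall x, I x -> K x) -> forall x, K x -> I x].

Definition jacobson (x : R) : Prop :=
  forall I : R -> Prop, maximal_left_ideal I -> I x.

(* R/J(R) is boolean: every element of the quotient is idempotent,
   i.e. x^2 - x lies in J(R) for every x in R. *)
Definition boolean_mod_jacobson : Prop :=
  forall x : R, jacobson (x * x - x).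

Definition jacobson_nil_bounded : Prop :=
  exists k : nat, forall r : R, jacobson r -> r ^+ k = 0.

End Defs.

From mathcomp Require Import all_boot all_algebra.
From mathcomp Require Import ring zify.
From Stdlib Require Import Classical.
Set Implicit Arguments.
Unset Strict Implicit.
Unset Printing Implicit Defensive.
Import GRing.Theory.
Local Open Scope ring_scope.

(* (1) A unit v has the trivial clean decomposition 0 + v, so in a uniquely
   clean ring every clean decomposition of a unit v is 0 + v.
   (2) Idempotents lift modulo the nil ideal J = J(R) by the Newton iteration
   a |-> 3a^2 - 2a^3, and a lift e of r gives the clean decomposition
   r = (1 - e) + (2e - 1)(1 + (2e - 1)(r - e)).  As R/J is boolean, every
   unit is 1 + x with x in J, and 2 lies in J; both are nilpotent of index
   k, and 2^k divides the binomial coefficients C(2^(2k), i) for 0 < i < k,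
   so the exponent of U(R) divides 2^(2k).  An idempotent of J is 0, so
   again every clean decomposition of a unit v is 0 + v.  In both cases
   being clean with units of order dividing m is thus equivalent to U(R)
   having exponent dividing m, and the two minimality conditions coincide. *)

Lemma exists_least_pos (P : nat -> Prop) (N : nat) : (0 < N)%N -> P N ->
  exists n, [/\ (0 < n)%N, P n & forall m, (0 < m)%N -> P m -> (n <= m)%N].
Proof.
elim/ltn_ind: N => N IH N_gt0 PN.
have [[m [m_gt0 ltmN Pm]] | no_smaller] :=
  classic (exists m, [/\ (0 < m)%N, (m < N)%N & P m]); first exact: IH m ltmN m_gt0 Pm.
exists N; split=> // m m_gt0 Pm; rewrite leqNgt; apply/negP => ltmN.
by apply: no_smaller; exists m.
Qed.

Lemma dvdn_bin_pfactor (p m i : nat) : prime p -> (0 < i)%N ->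
  (p ^ (m - logn p i) %| 'C(p ^ m, i))%N.
Proof.
move=> p_pr; case: i => // i _.
have [ltNi | leiN] := ltnP (p ^ m) i.+1; first by rewrite bin_small.
have pm_gt0 : (0 < p ^ m)%N by rewrite expn_gt0 prime_gt0.
have C_gt0 : (0 < 'C(p ^ m, i.+1))%N by rewrite bin_gt0.
have C'_gt0 : (0 < 'C((p ^ m).-1, i))%N by rewrite bin_gt0 -ltnS prednK.
have := congr1 (logn p) (mul_bin_diag (p ^ m) i).
rewrite !lognM // pfactorK // => logE.
by rewrite pfactor_dvdn //; lia.
Qed.

Section Nilpotent.
Variable R : nzRingType.

Lemma expr_nil_leq (x : R) (k m : nat) : x ^+ k = 0 -> (k <= m)%N -> x ^+ m = 0.
Proof. by move=> xk0 lekm; rewrite -(subnKC lekm) exprD xk0 mul0r. Qed.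

(* The binomial expansion of (1 + x)^(p^(2K)) only keeps terms with i < K,
   whose coefficients are multiples of p^K. *)
Lemma exp_pfactor_1Dnil (p K : nat) (x : R) : prime p ->
  p%:R ^+ K = 0 :> R -> x ^+ K = 0 -> (1 + x) ^+ (p ^ (K + K)) = 1.
Proof.
move=> p_pr pK0 xK0.
rewrite addrC exprD1n big_ord_recl expr0 bin0 mulr1n big1 ?addr0 // => i _.
rewrite lift0.
have [leKi | ltiK] := leqP K i.+1; first by rewrite (expr_nil_leq xK0 leKi) mul0rn.
have /dvdnP [q ->] : (p ^ K %| 'C(p ^ (K + K), i.+1))%N.
  apply: dvdn_trans (dvdn_bin_pfactor _ p_pr _) => //.
  by rewrite dvdn_exp2l //; have := ltn_logl p (ltn0Sn i); lia.
by rewrite mulrnA -mulr_natr natrX pK0 mulr0.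
Qed.

End Nilpotent.

Section NewtonIdempotent.
Variable R : nzRingType.

Lemma commr_int (a : R) : commr_rmorph (intmul (1 : R)) a.
Proof. by move=> z; apply/commrMz/commr1. Qed.

Definition newton_idem (a : R) : R := 3 * (a * a) - 2 * (a * a * a).

(* Both identities hold in Z[X]; evaluation at a is a ring morphism since a
   commutes with the integers. *)
Lemma newton_idem_defect (a : R) :
  let n := a * a - a in
  newton_idem a * newton_idem a - newton_idem a = (4 * n - 3) * n ^+ 2.
Proof.
have P : let n := 'X * 'X - 'X in let b := 3 * ('X * 'X) - 2 * ('X * 'X * 'X) in
  b * b - b = (4 * n - 3) * n ^+ 2 :> {poly int} by move=> /=; ring.
move: (congr1 (horner_morph (commr_int a)) P) => /=.
by rewrite !(rmorphB, rmorphM, rmorph_nat) /= horner_morphX.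
Qed.

Lemma newton_idem_sub (a : R) : newton_idem a - a = (1 - 2 * a) * (a * a - a).
Proof.
have P : 3 * ('X * 'X) - 2 * ('X * 'X * 'X) - 'X = (1 - 2 * 'X) * ('X * 'X - 'X)
  :> {poly int} by ring.
move: (congr1 (horner_morph (commr_int a)) P) => /=.
by rewrite !(rmorphB, rmorphM, rmorph_nat, rmorph1) /= horner_morphX.
Qed.

End NewtonIdempotent.

Lemma idempotent_expS (R : unitRingType) (e : R) (n : nat) : idempotent e -> e ^+ n.+1 = e.
Proof. by move=> idem_e; elim: n => // n IHn; rewrite exprS IHn. Qed.

Lemma unit1D_nil (R : unitRingType) (x : R) (k : nat) :
  x ^+ k = 0 -> 1 + x \is a GRing.unit.
Proof.
move=> xk0; set S := \sum_(i < k) (- x) ^+ i.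
have S_inv : (1 + x) * S = 1.
  have := subrX1 (- x) k; rewrite exprNn xk0 mulr0 sub0r => defS.
  by rewrite -[1 + x]opprK opprD -[- 1 - x]addrC mulNr -defS opprK.
have comm_S : GRing.comm (1 + x) S.
  apply: commr_sum => i _; apply: commrX; apply: commrN; apply: commr_sym.
  exact: commrD (commr1 _) (commr_refl _).
by apply/unitrP; exists S; rewrite -comm_S.
Qed.

Section LeftIdeal.
Variables (R : unitRingType) (I : R -> Prop).
Hypothesis idealI : left_ideal I.

Lemma left_ideal0 : I 0.
Proof. by case: idealI. Qed.

Lemma left_idealB (x y : R) : I x -> I y -> I (x - y).
Proof. by case: idealI => _ + _; apply. Qed.

Lemma left_idealMl (r x : R) : I x -> I (r * x).
Proof. by case: idealI => _ _; apply. Qed.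

Lemma left_idealN (x : R) : I x -> I (- x).
Proof. by move=> Ix; rewrite -sub0r; apply: left_idealB => //; apply: left_ideal0. Qed.

Lemma left_idealD (x y : R) : I x -> I y -> I (x + y).
Proof. by move=> Ix Iy; rewrite -[y]opprK; apply/left_idealB/left_idealN. Qed.

(* Each Newton step squares the defect a^2 - a, hence j steps suffice when
   (a^2 - a)^(2^j) = 0. *)
Lemma lift_idempotent (j : nat) (a : R) :
  I (a * a - a) -> (a * a - a) ^+ (2 ^ j) = 0 -> exists2 e, idempotent e & I (e - a).
Proof.
elim: j a => [|j IHj] a Ia nil_a.
  exists a; last by rewrite subrr; apply: left_ideal0.
  by apply/eqP; rewrite -subr_eq0 -[_ - _]expr1 nil_a.
have [||e idem_e Ie] := IHj (newton_idem a).
- by rewrite newton_idem_defect; do 2!apply: left_idealMl.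
- set n := a * a - a; have comm_n : GRing.comm (4 * n - 3) (n ^+ 2).
    apply: commrX; apply: commr_sym.
    apply: commrB; last exact: commr_nat.
    exact: commrM (commr_nat _ _) (commr_refl _).
  by rewrite newton_idem_defect exprMn_comm // -exprM -expnS nil_a mulr0.
exists e => //; have -> : e - a = (e - newton_idem a) + (newton_idem a - a).
  by rewrite addrA subrK.
by apply: left_idealD Ie _; rewrite newton_idem_sub; apply: left_idealMl.
Qed.

End LeftIdeal.

Lemma left_ideal_jacobson (R : unitRingType) : left_ideal (@jacobson R).
Proof.
split=> [I [[]] // | x y Jx Jy I maxI | r x Jx I maxI].
  by case: (maxI) => [[_ I_B _]] _ _; apply: I_B; [apply: Jx | apply: Jy].
by case: (maxI) => [[_ _ I_M]] _ _; apply: I_M; apply: Jx.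
Qed.

Section UnitExponent.
Variable R : unitRingType.

Definition clean_ring : Prop :=
  forall r : R, exists e u : R, [/\ idempotent e, u \is a GRing.unit & r = e + u].

Lemma torsion_clean_of_units_killed (m : nat) :
  clean_ring -> units_killed_by R m -> torsion_clean_with R m.
Proof.
move=> clean_R killed r; have [e [u [idem_e unit_u ->]]] := clean_R r.
by exists e, u; split=> //; apply: killed.
Qed.

Lemma n_torsion_clean_iff_unit_exponent (n : nat) :
  (forall m, torsion_clean_with R m <-> units_killed_by R m) ->
  n_torsion_clean R n <-> unit_exponent R n.
Proof.
move=> tcE; split=> -[n_gt0 Pn n_min]; split=> // [|m m_gt0 Pm].
- exact/tcE.
- by apply: n_min => //; apply/tcE.
- exact/tcE.
- by apply: n_min => //; apply/tcE.
Qed.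

Lemma unit_exponent_exists (N : nat) :
  (0 < N)%N -> units_killed_by R N -> exists n, unit_exponent R n.
Proof. exact: exists_least_pos. Qed.

Lemma unit_exponent_dvdn (n N : nat) :
  unit_exponent R n -> units_killed_by R N -> (n %| N)%N.
Proof.
move=> [n_gt0 killed_n n_min] killed_N; apply/eqP.
have [// | r_gt0] := posnP (N %% n); exfalso.
have killed_r : units_killed_by R (N %% n).
  move=> u unit_u; have := killed_N u unit_u.
  by rewrite {1}(divn_eq N n) exprD mulnC exprM killed_n // expr1n mul1r.
by have := n_min _ r_gt0 killed_r; rewrite leqNgt ltn_pmod.
Qed.

End UnitExponent.

Section UniquelyClean.
Variables (R : unitRingType) (uclean : uniquely_clean R).

Lemma uniquely_clean_clean : clean_ring R.
Proof. by move=> r; have [[e u] [[idem_e unit_u ->] _]] := uclean r; exists e, u. Qed.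

Lemma uniquely_clean_torsion_clean_iff (m : nat) :
  torsion_clean_with R m <-> units_killed_by R m.
Proof.
split; last exact/torsion_clean_of_units_killed/uniquely_clean_clean.
move=> tc v unit_v; have [e [u [idem_e unit_u um1 defv]]] := tc v.
have [p [_ uniq_p]] := uclean v.
have trivial_dec := uniq_p (0, v) (And3 (mul0r 0) unit_v (esym (add0r v))).
have := uniq_p (e, u) (And3 idem_e unit_u defv).
by rewrite trivial_dec => -[_ ->].
Qed.

End UniquelyClean.

Section BooleanModNilJacobson.
Variables (R : unitRingType) (k : nat).
Hypothesis boolR : boolean_mod_jacobson R.
Hypothesis nilJ : forall r : R, jacobson r -> r ^+ k = 0.

Let idealJ := left_ideal_jacobson R.

Lemma jacobson_idempotent_eq0 (e : R) : idempotent e -> jacobson e -> e = 0.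
Proof. by move=> idem_e Je; rewrite -(idempotent_expS k idem_e) exprSr nilJ // mul0r. Qed.

Lemma jacobson_unit_sub1 (u : R) : u \is a GRing.unit -> jacobson (u - 1).
Proof.
move=> unit_u; have := left_idealMl idealJ u^-1 (boolR u).
by rewrite mulrBr mulrA mulVr // mul1r.
Qed.

Lemma jacobson_two : jacobson (2%:R : R).
Proof. by have := boolR (-1); rewrite mulrNN mulr1 opprK. Qed.

Lemma boolean_mod_jacobson_clean : clean_ring R.
Proof.
move=> r; have [e idem_e Jer] : exists2 e, idempotent e & jacobson (e - r).
  apply: lift_idempotent idealJ k _ (boolR r) _.
  by apply: expr_nil_leq (nilJ (boolR r)) _; apply/ltnW/ltn_expl.
have fe : (1 - e) * e = 0 by rewrite mulrBl mul1r idem_e subrr.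
have ef : e * (1 - e) = 0 by rewrite mulrBr mulr1 idem_e subrr.
have ff : idempotent (1 - e) by rewrite /idempotent mulrBr mulr1 fe subr0.
set f := 1 - e in fe ef ff *; set w := e - f; set d := r - e.
have ww : w * w = 1.
  by rewrite /w mulrBl (mulrBr e) (mulrBr f) ef fe ff idem_e subr0 sub0r opprK /f addrC subrK.
have Jwd : jacobson (w * d).
  by apply: (left_idealMl idealJ); rewrite /d -opprB; apply: (left_idealN idealJ).
exists f, (w * (1 + w * d)); split=> //.
- rewrite unitrMr; first exact: unit1D_nil (nilJ Jwd).
  by apply/unitrP; exists w.
- by rewrite mulrDr mulr1 mulrA ww mul1r /w /d addrA [f + _]addrC subrK addrC subrK.
Qed.

Lemma boolean_mod_jacobson_torsion_clean_iff (m : nat) :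
  torsion_clean_with R m <-> units_killed_by R m.
Proof.
split; last exact/torsion_clean_of_units_killed/boolean_mod_jacobson_clean.
move=> tc v unit_v; have [e [u [idem_e unit_u um1 defv]]] := tc v.
suff e0 : e = 0 by rewrite defv e0 add0r.
apply: jacobson_idempotent_eq0 => //.
have -> : e = (v - 1) - (u - 1) by rewrite opprB addrA subrK defv addrK.
by apply: (left_idealB idealJ); apply: jacobson_unit_sub1.
Qed.

Lemma boolean_mod_jacobson_units_killed : units_killed_by R (2 ^ (k + k)).
Proof.
move=> u unit_u; rewrite -(subrK 1 u) addrC.
by apply: exp_pfactor_1Dnil; [| apply: nilJ; apply: jacobson_two |
  apply: nilJ; apply: jacobson_unit_sub1].
Qed.

End BooleanModNilJacobson.

Theorem corollary1p4 :
  (forall (R : unitRingType) (n : nat),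
      uniquely_clean R -> (n_torsion_clean R n <-> unit_exponent R n))
  /\
  (forall R : unitRingType,
      boolean_mod_jacobson R -> jacobson_nil_bounded R ->
      exists n : nat,
        [/\ unit_exponent R n, n_torsion_clean R n &
            exists k : nat, n = (2 ^ k)%N]).
Proof.
split=> [R n uclean | R boolR [k nilJ]].
  exact/n_torsion_clean_iff_unit_exponent/uniquely_clean_torsion_clean_iff.
have killed := boolean_mod_jacobson_units_killed boolR nilJ.
have [n expn] := unit_exponent_exists (expn_gt0 2 (k + k)) killed.
exists n; split=> //.
  by apply/(n_torsion_clean_iff_unit_exponent n
             (boolean_mod_jacobson_torsion_clean_iff boolR nilJ)).
have /(dvdn_pfactor _ _ (isT : prime 2)) [j _ ->] := unit_exponent_dvdn expn killed.
by exists j.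
Qed.
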